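(* Let $n\ge 5$ and let $f$ be an RDF of $P(n,2)$ of weight $\gamma_R(P(n,2))$ with $|V_2|$ minimum among all such minimum-weight RDFs. For any index $i$, if $r_f(V'(i,7)) \le 0.5$, then: (1) $r_f(V'(i,7)) \ge 0.5$ (so $r_f(V'(i,7))=0.5$); (2) $V'(i,7)\cap V_1=\{v_{i+3}\}$; (3) either $V'(i,7)\cap V_2=\{u_{i+1},u_{i+2},v_{i+5}\}$ and $V'(i,7)\cap V_0=V'(i,7)\setminus\{v_{i+3},u_{i+1},u_{i+2},v_{i+5}\}$, or $V'(i,7)\cap V_2=\{u_{i+4},u_{i+5},v_{i+1}\}$ and $V'(i,7)\cap V_0=V'(i,7)\setminus\{v_{i+3},u_{i+4},u_{i+5},v_{i+1}\}$.
   Context: For integers $n \ge 3$ and $1 \le k < n/2$, the generalized Petersen graph $P(n,k)$ has vertex set $\{v_i, u_i : 0 \le i \le n-1\}$ and edge set $\{v_iv_{i+1},\ v_iu_i,\ u_iu_{i+k} : 0 \le i \le n-1\}$, with subscripts taken modulo $n$. A Roman domination function (RDF) of a graph $G$ is a function $f: V(G)\to\{0,1,2\}$ such that every vertex $u$ with $f(u)=0$ is adjacent to at least one vertex $v$ with $f(v)=2$. Its weight is $\sum_{u\in V(G)} f(u)$; $\gamma_R(G)$ is the minimum weight of an RDF of $G$. For an RDF $f$ write $V_i=\{w: f(w)=i\}$, $i=0,1,2$. Define $g_f(w)=0.5$ if $w\in V_2$, $g_f(w)=1$ if $w\in V_1$, and $g_f(w)=0.5\,|N(w)\cap V_2|$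 if $w\in V_0$, where $N(w)$ is the set of neighbors of $w$. Let $r_f(w)=g_f(w)-0.5$ and, for $S\subseteq V(P(n,2))$, $r_f(S)=\sum_{w\in S} r_f(w)$. For an integer $i$ and $t\ge 1$, $V'(i,t)=\{v_j,u_j : i\le j\le i+t-1\}$ (subscripts modulo $n$). *)

From HB Require Import structures.
From mathcomp Require Import all_boot all_order all_algebra.
Set Implicit Arguments. Unset Strict Implicit. Unset Printing Implicit Defensive.
Import Order.TTheory GRing.Theory Num.Theory.

(* Vertices of P(n,k): (false, j) is v_j (outer), (true, j) is u_j (inner). *)
Definition vert (n : nat) := (bool * 'I_n)%type.

Definition gp_adj (n k : nat) (w z : vert n) : bool :=
  let x := val w.2 in let y := val z.2 in
  [|| [&& ~~ w.1, ~~ z.1 & (y == (x + 1) %% n) || (x == (y + 1) %% n)],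
      (w.1 != z.1) && (x == y)
    | [&& w.1, z.1 & (y == (x + k) %% n) || (x == (y + k) %% n)]].

Definition nbhd (n k : nat) (w : vert n) : {set vert n} := [set z | gp_adj k w z].

Definition isRDF (n k : nat) (f : vert n -> nat) : Prop :=
  (forall w, f w <= 2) /\
  (forall w, f w = 0 -> exists z, gp_adj k w z /\ f z = 2).

Definition weight (n : nat) (f : vert n -> nat) : nat := \sum_(w : vert n) f w.

Definition is_gammaR_RDF (n k : nat) (f : vert n -> nat) : Prop :=
  isRDF k f /\ forall g : vert n -> nat, isRDF k g -> weight f <= weight g.

Definition Vset (n : nat) (f : vert n -> nat) (a : nat) : {set vert n} :=
  [set w | f w == a].

Definition min_V2_gammaR_RDF (n k : nat) (f : vert n -> nat) : Prop :=
  is_gammaR_RDF k f /\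
  forall g : vert n -> nat, is_gammaR_RDF k g -> #|Vset f 2| <= #|Vset g 2|.

Local Open Scope ring_scope.

Definition g_f (n k : nat) (f : vert n -> nat) (w : vert n) : rat :=
  if f w == 2%N then 1 / 2
  else if f w == 1%N then 1
  else (#|nbhd k w :&: Vset f 2|)%:R / 2.

Definition r_f (n k : nat) (f : vert n -> nat) (w : vert n) : rat :=
  g_f k f w - 1 / 2.

Definition r_set (n k : nat) (f : vert n -> nat) (S : {set vert n}) : rat :=
  \sum_(w in S) r_f k f w.

Local Close Scope ring_scope.

Definition Vwin (n i t : nat) : {set vert n} :=
  [set w : vert n | [exists j : 'I_t, val w.2 == (i + j) %% n]].

Definition vx (n : nat) (b : bool) (j : nat) : {set vert n} :=
  [set w : vert n | (w.1 == b) && (val w.2 == j %% n)].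

From mathcomp Require Import all_boot all_order all_algebra.
From mathcomp Require Import zify lra.

Set Implicit Arguments. Unset Strict Implicit. Unset Printing Implicit Defensive.
Import Order.TTheory GRing.Theory Num.Theory.

(* 1. Local structure of a minimum-weight RDF f with |V_2| minimum (for any
      P(n,k)): every label is <= 2; a 0 has a V_2-neighbour; a 1 has none
      (else lower it to 0); a 2 has none and has at least two private
      neighbours (else replace the 2 by 0 or 1 and the private neighbours by
      1, a no heavier RDF with fewer 2's).  Consequently r_f(w) = e(w)/2 for
      a natural number e(w), the excess of w.
   2. Explicit neighbour lists of P(n,2) for n >= 5 turn these set-level facts
      into counts along lists.
   3. Unrolling the ladder around V'(i,7) gives a strip of 22 positions
      (vertices of indices i-2 .. i+8).  The facts of 1. become finitely many
      local constraints on the {0,1,2}-labelling of the strip, together with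
      the budget "total excess of the window <= 1" coming from the hypothesis
      r_f(V'(i,7)) <= 1/2.  An exhaustive search, run by vm_compute, shows that
      every admissible labelling has excess exactly 1 on the window and one of
      the two patterns of the statement; for n = 5, 6 the window is the whole
      graph and, adding periodicity, no labelling is admissible.
   4. The theorem follows by translating the pattern back to vertex sets. *)

Definition deg2 n k (f : vert n -> nat) (w : vert n) : nat := #|nbhd k w :&: Vset f 2|.

Definition priv n k (f : vert n -> nat) (w : vert n) : {set vert n} :=
  [set y in nbhd k w | (f y == 0) && (deg2 k f y == 1)].

Lemma weight_exchange n (f g : vert n -> nat) (D : {set vert n}) :
  (forall z, z \notin D -> g z = f z) ->
  weight g + \sum_(z in D) f z = weight f + \sum_(z in D) g z.
Proof.
move=> gf; rewrite /weight [X in _ + X]big_mkcond [X in _ = _ + X]big_mkcond.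
rewrite -!big_split /=; apply: eq_bigr => z _.
by case: (boolP (z \in D)) => zD /=; [rewrite addnC | rewrite gf].
Qed.

Lemma card_V2_exchange n (f g : vert n -> nat) (D : {set vert n}) :
  (forall z, z \notin D -> g z = f z) ->
  #|Vset g 2| + #|Vset f 2 :&: D| = #|Vset f 2| + #|Vset g 2 :&: D|.
Proof.
move=> gf; rewrite -(cardsID D (Vset g 2)) -(cardsID D (Vset f 2)).
have -> : Vset g 2 :\: D = Vset f 2 :\: D.
  by apply/setP => z; rewrite !inE; case: (boolP (z \in D)) => //= zD; rewrite gf.
lia.
Qed.

Lemma adj_sym n k (w z : vert n) : gp_adj k w z = gp_adj k z w.
Proof.
rewrite /gp_adj; case: w z => [b x] [c y] /=.
case: b; case: c => /=; rewrite ?orbF ?andbF ?andbT //.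
all: first [by rewrite orbC | by rewrite eq_sym].
Qed.

Lemma two_avoid (T : finType) (A : {set T}) (w : T) :
  1 < #|A| -> exists2 y, y \in A & y != w.
Proof.
move/card_gt1P => [x [y [xA yA xy]]].
by case: (eqVneq x w) => [xw | ]; [exists y; rewrite // -xw eq_sym | exists x].
Qed.

(* Excess of a vertex over the average 1/2, in units of 1/2 (see minRDF_r_f). *)
Definition excess n k (f : vert n -> nat) (w : vert n) : nat :=
  if f w == 2 then 0 else if f w == 1 then 1 else (deg2 k f w).-1.

Lemma setI_V0 n (A : {set vert n}) (f : vert n -> nat) : (forall w, f w <= 2) ->
  A :&: Vset f 0 = A :\: ((A :&: Vset f 1) :|: (A :&: Vset f 2)).
Proof.
move=> f2; apply/setP => w; rewrite !inE; case: (w \in A) => //=.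
by have := f2 w; case: (f w) => [|[|[|]]].
Qed.

Section MinimalRDF.

Variables (n k : nat) (f : vert n -> nat).
Hypothesis fmin : min_V2_gammaR_RDF k f.

Lemma minRDF_le2 w : f w <= 2.
Proof. by case: fmin => [[[le2 _] _] _]. Qed.

Lemma minRDF_dom w : f w = 0 -> 0 < deg2 k f w.
Proof.
case: fmin => [[[_ dom] _] _] /dom [z [wz fz]].
by apply/card_gt0P; exists z; rewrite !inE wz fz.
Qed.

Lemma minRDF_V2 (g : vert n -> nat) :
  isRDF k g -> weight g <= weight f -> #|Vset f 2| <= #|Vset g 2|.
Proof.
case: fmin => [[fR fw] fV2] gR gf; apply: fV2; split=> // h hR.
exact: leq_trans gf (fw h hR).
Qed.

(* Vertices of weight 1 have no V_2-neighbour: otherwise lower them to 0. *)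
Lemma minRDF_one w : f w = 1 -> deg2 k f w = 0.
Proof.
move=> fw1; apply/eqP; rewrite -leqn0 leqNgt; apply/negP => /card_gt0P [y].
rewrite !inE => /andP [wy /eqP fy2].
case: fmin => [[[fle2 fdom] fopt] _].
pose g z := if z == w then 0 else f z.
have g_other z : f z = 2 -> g z = 2.
  by rewrite /g; case: eqP => [-> | _]; rewrite ?fw1.
have gR : isRDF k g.
  split=> z; first by rewrite /g; case: eqP.
  rewrite {1}/g; case: eqP => [-> _ | _ /fdom [x [zx fx]]].
    by exists y; rewrite g_other.
  by exists x; rewrite g_other.
have E : weight g + \sum_(z in [set w]) f z = weight f + \sum_(z in [set w]) g z.
  by apply: weight_exchange => z; rewrite inE /g => /negbTE ->.
have := fopt g gR; move: E; rewrite !big_set1 /g eqxx fw1; lia.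
Qed.

Let exchange (w : vert n) (b : nat) (z : vert n) : nat :=
  if z == w then b else if z \in priv k f w then 1 else f z.

Lemma priv_V0 w y : y \in priv k f w -> f y = 0.
Proof. by rewrite inE => /and3P [_ /eqP]. Qed.

Lemma exchange_RDF w b : ~~ gp_adj k w w -> b <= 1 -> (b = 0 -> 0 < deg2 k f w) ->
  isRDF k (exchange w b).
Proof.
move=> irr b1 bdom; case: fmin => [[[fle2 fdom] _] _].
have g2 z : z != w -> f z = 2 -> exchange w b z = 2.
  move=> zw fz; have zP : z \notin priv k f w by apply/negP => /priv_V0; rewrite fz.
  by rewrite /exchange (negbTE zw) (negbTE zP).
split=> z; first by rewrite /exchange; case: eqP => _; [lia | case: ifP].
rewrite {1}/exchange; case: eqP => [-> b0 | /eqP zw].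
  have /card_gt0P [y] := bdom b0; rewrite !inE => /andP [wy /eqP fy].
  have yw : y != w by apply: contraNneq irr => yw; rewrite -{2}yw.
  by exists y; rewrite g2.
case: ifP => // zP fz; have [y [zy fy]] := fdom z fz.
case: (eqVneq y w) => [yw | yw]; last by exists y; rewrite g2.
(* z is a non-private neighbour of w, hence it has a second V_2-neighbour *)
have wz : gp_adj k w z by rewrite adj_sym -yw.
have two : 1 < deg2 k f z.
  by have := minRDF_dom fz; move: zP; rewrite !inE wz fz eqxx /=; lia.
have [y'] := two_avoid w two; rewrite !inE => /andP [zy' /eqP fy'] y'w.
by exists y'; rewrite g2.
Qed.

(* The exchange has fewer 2's than f, so by minimality it must be strictly
   heavier: b + #|priv f w| > 2. *)
Lemma minRDF_two_exchange w (b : nat) :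
  ~~ gp_adj k w w -> f w = 2 -> b <= 1 -> (b = 0 -> 0 < deg2 k f w) ->
  2 < b + #|priv k f w|.
Proof.
move=> irr fw2 b1 bdom; rewrite ltnNge; apply/negP => light.
set P := priv k f w in light *; set g := exchange w b.
have wP : w \notin P by apply/negP => /priv_V0; rewrite fw2.
have gout z : z \notin w |: P -> g z = f z.
  by rewrite in_setU1 negb_or /g /exchange => /andP [/negbTE -> /negbTE ->].
have gD z : z \in w |: P -> g z <= 1.
  by rewrite in_setU1 /g /exchange => /orP [/eqP -> | zP]; rewrite ?eqxx // zP; case: eqP.
have gP : \sum_(z in P) g z = #|P|.
  rewrite -sum1_card; apply: eq_bigr => z zP.
  by rewrite /g /exchange zP; case: eqP => // zw; move: wP; rewrite -zw zP.
have weight_le : weight g + 2 = weight f + (b + #|P|).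
  have := @weight_exchange _ f g (w |: P) gout.
  rewrite !big_setU1 //= big1 => [|z /priv_V0] //.
  by rewrite gP fw2 /g /exchange eqxx.
have V2_lt : #|Vset g 2| < #|Vset f 2|.
  have := @card_V2_exchange _ f g (w |: P) gout.
  have -> : Vset g 2 :&: (w |: P) = set0.
    apply/setP => z; rewrite in_setI in_set0 [z \in Vset _ _]inE.
    by case: (boolP (z \in w |: P)) => [/gD | _]; rewrite ?andbF //; case: (g z) => [|[|]].
  have : 0 < #|Vset f 2 :&: (w |: P)|.
    by apply/card_gt0P; exists w; rewrite !inE fw2 !eqxx.
  rewrite cards0; lia.
have := minRDF_V2 (exchange_RDF irr b1 bdom); rewrite -/g; lia.
Qed.

(* A vertex of weight 2 with at most 3 neighbours has no V_2-neighbour: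
   otherwise the exchange with b = 0 would require three private neighbours,
   while one of its at most three neighbours is in V_2. *)
Lemma minRDF_two_isolated w :
  ~~ gp_adj k w w -> #|nbhd k w| <= 3 -> f w = 2 -> deg2 k f w = 0.
Proof.
move=> irr deg3 fw2; apply/eqP; rewrite -leqn0 leqNgt; apply/negP => dom.
have := minRDF_two_exchange irr fw2 (leq0n 1) (fun _ => dom); rewrite add0n.
have disj : priv k f w :&: (nbhd k w :&: Vset f 2) = set0.
  by apply/setP => z; rewrite !inE; case: (f z) => [|[|[|]]]; rewrite /= ?andbF.
have sub : priv k f w :|: (nbhd k w :&: Vset f 2) \subset nbhd k w.
  by apply/subsetP => z; rewrite !inE => /orP [/andP [] | /andP []].
have := cardsUI (priv k f w) (nbhd k w :&: Vset f 2).
rewrite disj cards0 addn0 -/(deg2 k f w) => E.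
have := subset_leq_card sub; lia.
Qed.

Lemma minRDF_two_private w : ~~ gp_adj k w w -> f w = 2 -> 1 < #|priv k f w|.
Proof.
move=> irr fw2; have := @minRDF_two_exchange w 1 irr fw2 isT.
by rewrite add1n ltnS; apply.
Qed.

Local Open Scope ring_scope.

Lemma minRDF_r_f w : r_f k f w = (excess k f w)%:R / 2.
Proof.
rewrite /r_f /g_f /excess -/(deg2 k f w); have := minRDF_le2 w.
case fw : (f w) => [|[|[|]]] //= _.
have := minRDF_dom fw; case: (deg2 k f w) => // d _.
rewrite /= -addn1 natrD; lra.
Qed.

End MinimalRDF.

Definition rv n' (b : bool) (x : nat) : vert n'.+1 := (b, inord (x %% n'.+1)).

Lemma rv_index n' b x : val (rv n' b x).2 = x %% n'.+1.
Proof. by rewrite /= inordK // ltn_pmod. Qed.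

Lemma rv_mod n' b x y : x %% n'.+1 = y %% n'.+1 -> rv n' b x = rv n' b y.
Proof. by rewrite /rv => ->. Qed.

Lemma eq_rv n' (z : vert n'.+1) b x :
  (z == rv n' b x) = (z.1 == b) && (val z.2 == x %% n'.+1).
Proof. by case: z => c y; rewrite xpair_eqE -(inj_eq val_inj) rv_index. Qed.

Lemma vx_set1 n' b j : vx n'.+1 b j = [set rv n' b j].
Proof. by apply/setP => w; rewrite !inE eq_rv. Qed.

Definition nbs n' (w : vert n'.+1) : seq (vert n'.+1) :=
  let x := val w.2 in
  if w.1 then [:: rv n' true (x + 2); rv n' true (x + (n'.+1 - 2)); rv n' false x]
  else [:: rv n' false (x + 1); rv n' false (x + (n'.+1 - 1)); rv n' true x].

Lemma mod_flip N x y d : d <= N -> x < N -> y < N ->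
  (x == (y + d) %% N) = (y == (x + (N - d)) %% N).
Proof.
move=> dN xN yN.
rewrite -{1}(modn_small xN) -(eqn_modDr (N - d)) -addnA subnKC // modnDr.
by rewrite (modn_small yN) eq_sym.
Qed.

Lemma mod_ne N x a b : a < N -> b < N -> a != b -> (x + a) %% N != (x + b) %% N.
Proof. by move=> aN bN ab; rewrite eqn_modDl !modn_small. Qed.

Lemma self_ne N x d : x < N -> 0 < d < N -> (x == (x + d) %% N) = false.
Proof.
move=> xN /andP [d0 dN]; apply/negbTE; have := @mod_ne N x 0 d.
rewrite addn0 modn_small //; apply => //; lia.
Qed.

Section NeighbourList.

Variable n' : nat.
Hypothesis n_ge5 : 4 < n'.+1.

Lemma adjE (w z : vert n'.+1) : gp_adj 2 w z = (z \in nbs w).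
Proof.
case: w z => [b x] [c y]; rewrite /gp_adj /nbs /=.
have xN := ltn_ord x; have yN := ltn_ord y.
case: b; case: c; rewrite !inE !eq_rv /= ?orbF ?andbF ?andbT ?(modn_small xN) //.
- rewrite (@mod_flip n'.+1 x y 2) //; lia.
- rewrite (@mod_flip n'.+1 x y 1) //; lia.
Qed.

Lemma nbs_uniq (w : vert n'.+1) : uniq (nbs w).
Proof.
case: w => [[] x]; rewrite /nbs /= !inE !eq_rv !rv_index /= ?andbF ?andbT ?orbF;
by apply: mod_ne; lia.
Qed.

Lemma adj_irr (w : vert n'.+1) : ~~ gp_adj 2 w w.
Proof.
rewrite adjE; case: w => [[] x]; have xN := ltn_ord x;
rewrite /nbs /= !inE !eq_rv /= ?andbF ?andbT ?orbF !self_ne //; lia.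
Qed.

Lemma card_nbhd_pred (P : pred (vert n'.+1)) (w : vert n'.+1) :
  #|nbhd 2 w :&: [set y | P y]| = count P (nbs w).
Proof.
rewrite -size_filter -(card_uniqP (filter_uniq P (nbs_uniq w))).
by apply: eq_card => z; rewrite !inE mem_filter adjE andbC.
Qed.

Lemma card_nbhd (w : vert n'.+1) : #|nbhd 2 w| = 3.
Proof.
have := card_nbhd_pred predT w; rewrite count_predT setIT.
by move=> ->; rewrite /nbs; case: (w.1).
Qed.

Lemma deg2E (f : vert n'.+1 -> nat) w : deg2 2 f w = count (fun z => f z == 2) (nbs w).
Proof. by rewrite -card_nbhd_pred. Qed.

Lemma card_privE (f : vert n'.+1 -> nat) w :
  #|priv 2 f w| = count (fun y => (f y == 0) && (deg2 2 f y == 1)) (nbs w).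
Proof. by rewrite -card_nbhd_pred; apply: eq_card => y; rewrite !inE. Qed.

End NeighbourList.

(* Position k (0 <= k < 22) of the strip stands
   for v_(i-2+k/2) when k is even and for u_(i-2+k/2) when k is odd, so that the
   window V'(i,t) occupies the positions 4 .. 2t+3.  The functions below mirror,
   on labellings p : nat -> nat of the strip, the notions defined on P(n,2). *)

Definition lnbrs (k : nat) : seq nat :=
  if odd k then [:: k + 4; k - 4; k.-1] else [:: k + 2; k - 2; k.+1].

(* Positions all of whose neighbours lie in the strip 0 .. 21. *)
Definition interior (k : nat) : bool :=
  if odd k then 5 <= k <= 17 else 2 <= k <= 18.

Definition window (t : nat) : seq nat := iota 4 (2 * t).

Definition ldeg2 (p : nat -> nat) (k : nat) : nat := count (fun y => p y == 2) (lnbrs k).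

Definition lexcess (p : nat -> nat) (k : nat) : nat :=
  if p k == 2 then 0 else if p k == 1 then 1 else (ldeg2 p k).-1.

(* Local constraints satisfied by (the restriction to the strip of) a minimal
   RDF: the domination rules at a position, the two private neighbours of a
   2, an upper bound 1 on a sum of excesses, and equality of two labels
   (periodicity, used when the window wraps around the whole graph). *)
Inductive constr :=
  | Dom of nat
  | Private of nat
  | Budget of seq nat
  | Period of nat & nat.

Definition evalc (c : constr) (p : nat -> nat) : bool :=
  match c with
  | Dom x => ((p x == 0) ==> (0 < ldeg2 p x)) && ((p x != 0) ==> (ldeg2 p x == 0))
  | Private x =>
      (p x == 2) ==> (2 <= count (fun y => (p y == 0) && (ldeg2 p y == 1)) (lnbrs x))
  | Budget xs => sumn (map (lexcess p) xs) <= 1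
  | Period x y => p x == p y
  end.

Definition reads (c : constr) : seq nat :=
  match c with
  | Dom x => x :: lnbrs x
  | Private x => x :: lnbrs x ++ flatten (map lnbrs (lnbrs x))
  | Budget xs => xs ++ flatten (map lnbrs xs)
  | Period x y => [:: x; y]
  end.

Definition maxl (s : seq nat) : nat := foldr maxn 0 s.

(* All constraints imposed on the strip for a window of length m; with
   per = true the labelling is moreover m-periodic (the case n = m). *)
Definition constraints (m : nat) (per : bool) : seq constr :=
  [seq Dom x | x <- iota 0 22 & interior x] ++
  [seq Private x | x <- iota 0 22 & interior x && all interior (lnbrs x)] ++
  [seq Budget [seq x <- window m | maxl (x :: lnbrs x) <= k] | k <- iota 0 22] ++
  (if per then [seq Period x (x - 2 * m) | x <- iota (2 * m) (22 - 2 * m)] else [::]).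

Definition constraints_at (m : nat) (per : bool) (k : nat) : seq constr :=
  [seq c <- constraints m per | maxl (reads c) == k].

Fixpoint search (m : nat) (per : bool) (k : nat) : seq (seq nat) :=
  match k with
  | 0 => [:: [::]]
  | k'.+1 =>
      let cs := constraints_at m per k' in
      [seq s <- allpairs (fun s v => rcons s v) (search m per k') [:: 0; 1; 2]
             | all (fun c => evalc c (nth 0 s)) cs]
  end.

Lemma searchS m per k :
  search m per k.+1 =
  [seq s <- allpairs (fun s v => rcons s v) (search m per k) [:: 0; 1; 2]
         | all (fun c => evalc c (nth 0 s)) (constraints_at m per k)].
Proof. by []. Qed.

(* The two admissible patterns on a window of length 7 (v_j, u_j alternately). *)
Definition patternA : seq nat := [:: 0;0; 0;2; 0;2; 1;0; 0;0; 2;0; 0;0].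
Definition patternB : seq nat := [:: 0;0; 2;0; 0;0; 1;0; 0;2; 0;2; 0;0].

Definition tight_window (p : nat -> nat) : bool :=
  (sumn (map (lexcess p) (window 7)) == 1) &&
  ((map p (window 7) == patternA) || (map p (window 7) == patternB)).

Lemma search_window7 : all (fun s => tight_window (nth 0 s)) (search 7 false 22).
Proof. by vm_compute. Qed.

Lemma search_wrap5 : search 5 true 22 = [::].
Proof. by vm_compute. Qed.

Lemma search_wrap6 : search 6 true 22 = [::].
Proof. by vm_compute. Qed.

Lemma ldeg2_local p q k : {in lnbrs k, p =1 q} -> ldeg2 p k = ldeg2 q k.
Proof. by move=> E; apply: eq_in_count => y /E ->. Qed.

Lemma lexcess_local p q k : {in k :: lnbrs k, p =1 q} -> lexcess p k = lexcess q k.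
Proof.
move=> E; rewrite /lexcess E ?mem_head // (@ldeg2_local _ q) // => j jk.
by apply: E; rewrite inE jk orbT.
Qed.

Lemma evalc_local c p q : {in reads c, p =1 q} -> evalc c p = evalc c q.
Proof.
have in_flat (xs : seq nat) x j : x \in xs -> j \in lnbrs x -> j \in flatten (map lnbrs xs).
  by move=> xs_x jx; apply/flattenP; exists (lnbrs x) => //; apply: map_f.
case: c => [x|x|xs|x y] /= E.
- rewrite E ?mem_head // (@ldeg2_local _ q) // => j jk.
  by apply: E; rewrite inE jk orbT.
- rewrite E ?mem_head //; congr (_ ==> _); congr (_ <= _); apply: eq_in_count => y yx.
  rewrite E ?(@ldeg2_local _ q) //; last by rewrite inE mem_cat yx orbT.
  by move=> j jy; apply: E; rewrite inE mem_cat (in_flat _ y) ?orbT.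
- congr (_ <= _); congr sumn; apply/eq_in_map => x xs_x; apply: lexcess_local => j.
  rewrite inE => /orP [/eqP -> | jx]; apply: E; rewrite mem_cat; first by rewrite xs_x.
  by rewrite (in_flat _ x) ?orbT.
- by rewrite !E ?mem_head // inE mem_head orbT.
Qed.

Lemma maxl_ge s j : j \in s -> j <= maxl s.
Proof.
elim: s => //= a s IH; rewrite inE => /orP [/eqP -> | /IH]; first exact: leq_maxl.
by move/leq_trans; apply; apply: leq_maxr.
Qed.

Lemma search_complete m per (P : nat -> nat) :
  (forall j, P j <= 2) -> all (evalc^~ P) (constraints m per) ->
  forall k, mkseq P k \in search m per k.
Proof.
move=> P2 PC; elim=> [|k IH]; first by rewrite inE.
have mkseqS : mkseq P k.+1 = rcons (mkseq P k) (P k).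
  by rewrite /mkseq -addn1 iotaD map_cat cats1.
rewrite searchS mem_filter; apply/andP; split.
  rewrite /constraints_at all_filter; apply: sub_all PC => c /= Pc; apply/implyP => /eqP rk.
  rewrite (@evalc_local _ _ P) // => j /maxl_ge; rewrite rk -ltnS => jk.
  by rewrite nth_mkseq.
rewrite mkseqS; apply: allpairs_f => //.
by have := P2 k; case: (P k) => [|[|[|]]].
Qed.

Lemma admissible_tight (p : nat -> nat) :
  (forall j, p j <= 2) -> all (evalc^~ p) (constraints 7 false) -> tight_window p.
Proof.
move=> p2 pC; have := allP search_window7 _ (search_complete p2 pC 22).
(* tight_window only reads positions below 22, where mkseq p 22 agrees with p:
   the two sides are convertible. *)
suff -> : tight_window (nth 0 (mkseq p 22)) = tight_window p by [].
reflexivity.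
Qed.

Lemma admissible_wrap_impossible (p : nat -> nat) m :
  m = 5 \/ m = 6 -> (forall j, p j <= 2) -> ~~ all (evalc^~ p) (constraints m true).
Proof.
move=> m56 p2; apply/negP => pC; have := search_complete p2 pC 22.
by case: m56 => ->; rewrite ?search_wrap5 ?search_wrap6.
Qed.

Definition strip n' (i k : nat) : vert n'.+1 := rv n' (odd k) (i + n'.-1 + k./2).

Section Strip.

Variables (n' i : nat).
Hypothesis n_ge5 : 4 < n'.+1.

Lemma nbs_strip k : interior k -> nbs (strip n' i k) = map (strip n' i) (lnbrs k).
Proof.
rewrite /interior /lnbrs /strip /nbs rv_index /=.
case ok : (odd k) => /andP [k1 k2] /=.
- have -> : odd (k + 4) = true by lia.
  have -> : odd (k - 4) = true by lia.
  have -> : odd k.-1 = false by lia.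
  congr [:: _; _; _]; apply: rv_mod; rewrite ?modnDml ?modn_mod.
  + congr (_ %% _); lia.
  + have -> : i + n'.-1 + k./2 + (n'.+1 - 2) = i + n'.-1 + (k - 4)./2 + n'.+1 by lia.
    by rewrite modnDr.
  + congr (_ %% _); lia.
- have -> : odd (k + 2) = false by lia.
  have -> : odd (k - 2) = false by lia.
  rewrite /= ok /=.
  congr [:: _; _; _]; apply: rv_mod; rewrite ?modnDml ?modn_mod.
  + congr (_ %% _); lia.
  + have -> : i + n'.-1 + k./2 + (n'.+1 - 1) = i + n'.-1 + (k - 2)./2 + n'.+1 by lia.
    by rewrite modnDr.
  + congr (_ %% _); lia.
Qed.

Lemma strip_window k : 4 <= k -> strip n' i k = rv n' (odd k) (i + (k./2).-2).
Proof.
move=> k4; apply: rv_mod.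
have -> : i + n'.-1 + k./2 = i + (k./2).-2 + n'.+1 by lia.
by rewrite modnDr.
Qed.

Lemma mem_Vwin t (w : vert n'.+1) : t <= n'.+1 ->
  (w \in Vwin n'.+1 i t) = (w \in map (strip n' i) (window t)).
Proof.
move=> tn; apply/idP/mapP => [| [k]].
- rewrite inE => /existsP [j /eqP wj]; exists (4 + 2 * j + w.1).
    by rewrite mem_iota; have := ltn_ord j; case: (w.1); lia.
  rewrite strip_window; last by lia.
  have -> : odd (4 + 2 * j + w.1) = w.1 by case: (w.1); lia.
  have -> : (4 + 2 * j + w.1)./2.-2 = j by case: (w.1); lia.
  by apply/eqP; rewrite eq_rv wj !eqxx.
- rewrite mem_iota => kw ->; rewrite inE; apply/existsP.
  have jt : (k./2).-2 < t by lia.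
  by exists (Ordinal jt); rewrite strip_window ?rv_index //; lia.
Qed.

Lemma uniq_window t : t <= n'.+1 -> uniq (map (strip n' i) (window t)).
Proof.
move=> tn; rewrite map_inj_in_uniq ?iota_uniq // => k1 k2.
rewrite !mem_iota => k1w k2w; rewrite !strip_window; try lia.
move/eqP; rewrite eq_rv rv_index /= => /andP [/eqP odd12].
by rewrite eqn_modDl !modn_small => [/eqP||]; lia.
Qed.

Lemma Vwin_wrap t : n'.+1 <= t -> Vwin n'.+1 i t = Vwin n'.+1 i n'.+1.
Proof.
move=> nt; apply/setP => w; rewrite !inE; apply/existsP/existsP => [[j /eqP wj] | [j wj]].
- have jn : j %% n'.+1 < n'.+1 by rewrite ltn_pmod.
  by exists (Ordinal jn); rewrite /= modnDmr wj.
- have jt : j < t by apply: leq_trans nt.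
  by exists (Ordinal jt).
Qed.

Variable f : vert n'.+1 -> nat.

Let p (k : nat) : nat := f (strip n' i k).

Lemma ldeg2_strip k : interior k -> ldeg2 p k = deg2 2 f (strip n' i k).
Proof. by move=> ik; rewrite /ldeg2 deg2E // nbs_strip // count_map. Qed.

Lemma lexcess_strip k : interior k -> lexcess p k = excess 2 f (strip n' i k).
Proof. by move=> ik; rewrite /lexcess /excess ldeg2_strip. Qed.

Hypothesis fmin : min_V2_gammaR_RDF 2 f.

Lemma constraints_hold m (per : bool) : m <= 7 -> per ==> (m == n'.+1) ->
  sumn (map (lexcess p) (window m)) <= 1 -> all (evalc^~ p) (constraints m per).
Proof.
move=> m7 per_m budget; rewrite !all_cat; apply/and4P; split.
- rewrite all_map all_filter; apply/allP => x _; apply/implyP => ix /=.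
  rewrite ldeg2_strip // /p; have := minRDF_le2 fmin (strip n' i x).
  case fx : (f _) => [|[|[|]]] // _ /=.
  + by rewrite (minRDF_dom fmin fx).
  + by rewrite (minRDF_one fmin fx).
  + by rewrite (minRDF_two_isolated fmin (adj_irr n_ge5 _) (eq_leq (card_nbhd n_ge5 _)) fx).
- rewrite all_map all_filter; apply/allP => x _.
  apply/implyP => /andP [ix inbrs] /=; apply/implyP => /eqP fx.
  have := minRDF_two_private fmin (adj_irr n_ge5 _) fx.
  rewrite card_privE // nbs_strip // count_map; congr (_ < _).
  by apply: eq_in_count => y yx /=; rewrite ldeg2_strip //; apply: (allP inbrs).
- rewrite all_map; apply/allP => k _ /=; apply: leq_trans budget.
  elim: (window m) => //= x s IH; case: ifP => _ /=; lia.
- case: per per_m => //= /eqP mn; rewrite all_map; apply/allP => x.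
  rewrite mem_iota => x_range /=; apply/eqP; rewrite /p; congr f.
  rewrite /strip; have -> : odd (x - 2 * m) = odd x by lia.
  apply: rv_mod; have -> : i + n'.-1 + x./2 = i + n'.-1 + (x - 2 * m)./2 + n'.+1 by lia.
  by rewrite modnDr.
Qed.

Local Open Scope ring_scope.

Lemma r_set_window t : (t <= n'.+1)%N -> (t <= 7)%N ->
  r_set 2 f (Vwin n'.+1 i t) = (sumn (map (lexcess p) (window t)))%:R / 2.
Proof.
move=> tn t7; rewrite /r_set (eq_bigr _ (fun w _ => minRDF_r_f fmin w)).
rewrite -mulr_suml -natr_sum -big_enum.
rewrite (perm_big _ (uniq_perm (enum_uniq _) (uniq_window tn) _)); last first.
  by move=> w; rewrite mem_enum mem_Vwin.
rewrite big_map sumnE big_map; congr (_%:R / 2).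
rewrite big_seq [RHS]big_seq; apply: eq_bigr => k kw.
rewrite lexcess_strip //; move: kw; rewrite mem_iota /interior.
by case: ifP; lia.
Qed.

Local Close Scope ring_scope.

Lemma Vwin_level t v : t <= n'.+1 ->
  Vwin n'.+1 i t :&: Vset f v =
  [set w | w \in map (strip n' i) [seq k <- window t | p k == v]].
Proof.
move=> tn; have -> : map (strip n' i) [seq k <- window t | p k == v] =
                     [seq w <- map (strip n' i) (window t) | f w == v].
  by rewrite filter_map.
by apply/setP => w; rewrite in_setI mem_Vwin // !inE mem_filter andbC.
Qed.

Lemma Vwin_pattern L v : 7 <= n'.+1 -> map p (window 7) = L ->
  Vwin n'.+1 i 7 :&: Vset f v =
  [set w | w \in map (strip n' i) [seq k <- window 7 | nth 0 L (k - 4) == v]].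
Proof.
move=> n7 pL; rewrite Vwin_level //.
suff -> : [seq k <- window 7 | p k == v] = [seq k <- window 7 | nth 0 L (k - 4) == v] by [].
apply: eq_in_filter => k; rewrite mem_iota => kw; rewrite -pL (nth_map 0); last first.
  by rewrite size_iota; lia.
by rewrite nth_iota; [congr (p _ == _) | ]; lia.
Qed.

End Strip.

Lemma half_le_half (S : nat) : (S%:R / 2 <= 1 / 2 :> rat)%R -> S <= 1.
Proof. by move=> h; rewrite -(ler_nat rat); lra. Qed.

Theorem lemma2p8 (n : nat) (f : vert n -> nat) (i : nat) :
  5 <= n ->
  min_V2_gammaR_RDF 2 f ->
  (r_set 2 f (Vwin n i 7) <= 1 / 2)%R ->
  (r_set 2 f (Vwin n i 7) >= 1 / 2)%R /\
  Vwin n i 7 :&: Vset f 1 = vx n false (i + 3) /\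
  ((Vwin n i 7 :&: Vset f 2 =
      vx n true (i + 1) :|: vx n true (i + 2) :|: vx n false (i + 5) /\
    Vwin n i 7 :&: Vset f 0 =
      Vwin n i 7 :\: (vx n false (i + 3) :|: vx n true (i + 1)
                      :|: vx n true (i + 2) :|: vx n false (i + 5)))
   \/
   (Vwin n i 7 :&: Vset f 2 =
      vx n true (i + 4) :|: vx n true (i + 5) :|: vx n false (i + 1) /\
    Vwin n i 7 :&: Vset f 0 =
      Vwin n i 7 :\: (vx n false (i + 3) :|: vx n true (i + 4)
                      :|: vx n true (i + 5) :|: vx n false (i + 1)))).
Proof.
case: n f => [//|n'] f n_ge5 fmin r_le.
pose p k := f (strip n' i k).
have p2 k : p k <= 2 by apply: minRDF_le2 fmin _.
case: (ltnP n'.+1 7) => [n_lt7 | n_ge7].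
  (* n = 5, 6: the window is the whole graph, and no labelling fits *)
  exfalso; have n7 : n'.+1 <= 7 by apply: ltnW.
  rewrite Vwin_wrap // r_set_window // in r_le.
  have := constraints_hold n_ge5 fmin (per := true) n7 (eqxx _) (half_le_half r_le).
  have n56 : n'.+1 = 5 \/ n'.+1 = 6 by lia.
  exact: (negP (admissible_wrap_impossible n56 p2)).
rewrite r_set_window // in r_le *.
have /andP [/eqP excess1 pat] := admissible_tight p2
  (constraints_hold n_ge5 fmin (per := false) (leqnn 7) isT (half_le_half r_le)).
split; first by rewrite excess1; lra.
have E1 : Vwin n'.+1 i 7 :&: Vset f 1 = vx n'.+1 false (i + 3).
  by case/orP: pat => /eqP pat; rewrite (Vwin_pattern n_ge5 _ n_ge7 pat);
     apply/setP => w; rewrite vx_set1 /= !inE strip_window.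
split=> //; rewrite (setI_V0 _ (minRDF_le2 fmin)) E1.
case/orP: pat => /eqP pat; rewrite (Vwin_pattern n_ge5 _ n_ge7 pat); [left | right];
  split; apply/setP => w; rewrite !vx_set1 /= !inE !strip_window //= -!orbA //.
all: by case: (w == rv n' false (i + 1)); rewrite /= ?orbT ?orbF.
Qed.
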